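(* Let $A\in\mathbb{R}^{d\times d}$ and let $\mathbb{A}x=Ax$. Let $N\ge1$ and real coefficients $h_{k,j}$ ($1\le k\le N$, $0\le j\le k-1$) be given. Define \[ x_{k+1}=x_k-\sum_{j=0}^{k}h_{k+1,j}\,\mathbb{A}x_j,\qquad k=0,1,\dots,N-1, \] and its H-dual \[ \hat x_{k+1}=\hat x_k-\sum_{j=0}^{k}h_{N-j,N-k-1}\,\mathbb{A}\hat x_j,\qquad k=0,1,\dots,N-1. \] If $\hat x_0=x_0$, then $\hat x_N=x_N$. *)

From mathcomp Require Import all_boot all_order all_algebra.
From mathcomp Require Import reals.
Set Implicit Arguments. Unset Strict Implicit. Unset Printing Implicit Defensive.

From mathcomp Require Import all_boot all_order all_algebra.
From mathcomp Require Import reals.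
From mathcomp Require Import zify.
Set Implicit Arguments. Unset Strict Implicit. Unset Printing Implicit Defensive.
Import GRing.Theory Num.Theory.
Local Open Scope ring_scope.

(* Run the dual recurrence on matrices from U_0 = 1: its iterates U_k are
   polynomials in A, so they commute with A and xh_k = U_k x_0.  Summation by
   parts expresses U_0 x_N - U_N x_0 through the residuals of the primal
   recurrence (weighted by U) and of the dual one (applied to x): once the index
   of the dual sum is reflected, i |-> N-1-i, its step-size terms h_{N-j,N-k}
   become exactly those of the primal sum and cancel.  Both residuals vanish,
   so x_N = U_N x_0 = xh_N. *)

Lemma sum_triangle_rev (V : nmodType) (N : nat) (F : nat -> nat -> V) :
  \sum_(i < N) \sum_(j < i.+1) F i j =
  \sum_(j < N) \sum_(m < N - j) F (N - m.+1)%N j.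
Proof.
transitivity (\sum_(0 <= i < N) \sum_(0 <= j < N | (j <= i)%N) F i j).
  rewrite big_mkord; apply: eq_bigr => i _.
  by rewrite -(big_mkord xpredT) (big_nat_widen _ _ _ _ _ (ltn_ord i)).
rewrite (exchange_big_dep_nat xpredT) // big_mkord; apply: eq_bigr => j _.
rewrite -big_nat_widenl // -(big_mkord xpredT (fun m => F (N - m.+1)%N j)).
rewrite big_nat_rev -{1}(add0n j) big_addn.
by apply: eq_big_nat => m /andP[_ lt]; congr F; lia.
Qed.

Definition hdual (T : Type) (N : nat) (h : nat -> nat -> T) (k j : nat) : T :=
  h (N - j)%N (N - k)%N.

Section FirstOrderMethod.

Variables (R : comRingType) (d : nat) (A : 'M[R]_d).

Definition fom_residual n (h : nat -> nat -> R) (x : nat -> 'M[R]_(d, n)) k :=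
  x k.+1 - x k + \sum_(j < k.+1) h k.+1 j *: (A *m x j).

Lemma fom_residual_eq0 n (h : nat -> nat -> R) (x : nat -> 'M[R]_(d, n)) k :
  x k.+1 = x k - \sum_(j < k.+1) h k.+1 j *: (A *m x j) -> fom_residual h x k = 0.
Proof. by rewrite /fom_residual => ->; rewrite addrAC subrK subrr. Qed.

(* Each step uses all previous iterates, so we recurse on the whole prefix:
   [fom_prefix h x0 k i] is the i-th iterate for every i <= k. *)
Fixpoint fom_prefix n (h : nat -> nat -> R) (x0 : 'M[R]_(d, n)) k :
    nat -> 'M_(d, n) :=
  if k is k'.+1 then
    let x := fom_prefix h x0 k' in
    fun i => if (i <= k')%N then x i
             else x k' - \sum_(j < k'.+1) h k'.+1 j *: (A *m x j)
  else fun=> x0.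

Definition fom_iter n (h : nat -> nat -> R) (x0 : 'M[R]_(d, n)) k :=
  fom_prefix h x0 k k.

Lemma fom_prefix_stable n (h : nat -> nat -> R) (x0 : 'M[R]_(d, n)) k i :
  (i <= k)%N -> fom_prefix h x0 k i = fom_iter h x0 i.
Proof.
elim: k => [|k IH]; first by rewrite leqn0 => /eqP->.
rewrite leq_eqVlt => /orP[/eqP-> // | lt_ik] /=.
by rewrite -ltnS lt_ik IH.
Qed.

Lemma fom_iterS n (h : nat -> nat -> R) (x0 : 'M[R]_(d, n)) k :
  fom_iter h x0 k.+1 =
  fom_iter h x0 k - \sum_(j < k.+1) h k.+1 j *: (A *m fom_iter h x0 j).
Proof.
rewrite /fom_iter /= ltnn; congr (_ - _); apply: eq_bigr => j _.
by rewrite fom_prefix_stable // -ltnS.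
Qed.

Lemma fom_iter_residual n (h : nat -> nat -> R) (x0 : 'M[R]_(d, n)) k :
  fom_residual h (fom_iter h x0) k = 0.
Proof. exact/fom_residual_eq0/fom_iterS. Qed.

Lemma fom_iter_unique n (h : nat -> nat -> R) N (x : nat -> 'M[R]_(d, n)) :
  (forall k, (k < N)%N ->
     x k.+1 = x k - \sum_(j < k.+1) h k.+1 j *: (A *m x j)) ->
  forall k, (k <= N)%N -> x k = fom_iter h (x 0%N) k.
Proof.
move=> x_rec; elim/ltn_ind => -[|k] IH le_kN //.
rewrite x_rec // fom_iterS IH ?(ltnW le_kN) //; congr (_ - _).
by apply: eq_bigr => j _; rewrite IH // ltnW // (leq_trans (ltn_ord j)).
Qed.

Lemma fom_iter_linear n p (h : nat -> nat -> R)
    (f : {linear 'M[R]_(d, n) -> 'M[R]_(d, p)}) x0 k :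
  (forall y, f (A *m y) = A *m f y) -> f (fom_iter h x0 k) = fom_iter h (f x0) k.
Proof.
move=> fA; elim/ltn_ind: k => -[|k] IH //.
rewrite !fom_iterS linearB linear_sum IH //; congr (_ - _); apply: eq_bigr => j _.
by rewrite linearZ /= fA IH.
Qed.

Lemma fom_iter_mulmxr n p (h : nat -> nat -> R) (x0 : 'M[R]_(d, n))
    (X : 'M[R]_(n, p)) k :
  fom_iter h (x0 *m X) k = fom_iter h x0 k *m X.
Proof.
by rewrite -(@fom_iter_linear _ _ h (mulmxr X)) // => y; rewrite /= mulmxA.
Qed.

Lemma fom_iter_comm (h : nat -> nat -> R) k :
  A *m fom_iter h 1%:M k = fom_iter h 1%:M k *m A.
Proof.
rewrite (@fom_iter_linear _ _ h (mulmx A)) => [|y]; last by rewrite /= !mulmxA.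
by rewrite -fom_iter_mulmxr mul1mx; congr fom_iter; apply: mulmx1.
Qed.

Lemma fom_adjoint_identity n (h : nat -> nat -> R) N (U : nat -> 'M[R]_d)
    (x : nat -> 'M[R]_(d, n)) :
  (forall k, A *m U k = U k *m A) ->
  U 0%N *m x N - U N *m x 0%N =
  \sum_(i < N) (U (N - i.+1)%N *m fom_residual h x i
                - fom_residual (hdual N h) U (N - i.+1)%N *m x i).
Proof.
move=> UA.
pose P i := \sum_(j < i.+1) h i.+1 j *: (U (N - i.+1)%N *m A *m x j).
pose Q i := \sum_(m < N - i) h (N - m)%N i *: (U m *m A *m x i).
have termE (i : 'I_N) :
    U (N - i.+1)%N *m fom_residual h x i
      - fom_residual (hdual N h) U (N - i.+1)%N *m x i
    = (U (N - i.+1)%N *m x i.+1 - U (N - i)%N *m x i) + (P i - Q i).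
  have lt_iN := ltn_ord i.
  have eSi : (N - i.+1).+1 = (N - i)%N by lia.
  rewrite /fom_residual eSi mulmxDr mulmxBr mulmxDl mulmxBl mulmx_sumr mulmx_suml.
  have -> : \sum_(j < i.+1) U (N - i.+1)%N *m (h i.+1 j *: (A *m x j)) = P i.
    by apply: eq_bigr => j _; rewrite -scalemxAr mulmxA.
  have -> : \sum_(m < N - i) (hdual N h (N - i) m *: (A *m U m)) *m x i = Q i.
    by apply: eq_bigr => m _; rewrite -scalemxAl UA /hdual subKn // ltnW.
  by rewrite opprD opprB addrACA [X in X + _]addrA subrK.
have sumPQ : \sum_(i < N) P i = \sum_(i < N) Q i.
  rewrite /P /Q (sum_triangle_rev _
    (fun i j => h i.+1 j *: (U (N - i.+1)%N *m A *m x j))).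
  apply: eq_bigr => j _; apply: eq_bigr => m _.
  have [e1 e2] : ((N - m.+1).+1 = N - m /\ N - (N - m) = m)%N.
    by have := ltn_ord m; split; lia.
  by rewrite e1 e2.
rewrite (eq_bigr _ (fun i _ => termE i)) big_split /=.
rewrite [\sum_(i < N) (P i - Q i)]sumrB sumPQ subrr addr0.
rewrite -(big_mkord xpredT
  (fun i => U (N - i.+1)%N *m x i.+1 - U (N - i)%N *m x i)).
by rewrite telescope_sumr // subnn subn0.
Qed.

End FirstOrderMethod.

Theorem propositionI1 (R : realType) (d N : nat) (A : 'M[R]_d)
    (h : nat -> nat -> R) (x xh : nat -> 'cV[R]_d) :
  (1 <= N)%N ->
  (forall k : nat, (k < N)%N ->
     x k.+1 = x k - \sum_(j < k.+1) h k.+1 j *: (A *m x j)) ->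
  (forall k : nat, (k < N)%N ->
     xh k.+1 = xh k - \sum_(j < k.+1) h (N - j)%N (N - k.+1)%N *: (A *m xh j)) ->
  xh 0%N = x 0%N ->
  xh N = x N.
Proof.
move=> _ x_rec xh_rec xh0.
pose U := fom_iter A (hdual N h) 1%:M.
have xhN : xh N = U N *m x 0%N.
  rewrite (fom_iter_unique (h := hdual N h) xh_rec) // xh0.
  by rewrite /U -fom_iter_mulmxr mul1mx.
have := fom_adjoint_identity h N x (fom_iter_comm A (hdual N h)).
rewrite big1 => [/eqP|i _]; first by rewrite mul1mx subr_eq0 xhN => /eqP.
by rewrite fom_iter_residual (fom_residual_eq0 (x_rec i (ltn_ord i))) mulmx0 mul0mx subrr.
Qed.
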